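(* In the privacy game with $\varrho\ge 0$, fix $\epsilon>0$ and $(\alpha^0,\beta^0)\in A\times B$, and let $\{(\alpha^k,\beta^k)\}_{k\in\mathbb{N}}$ be generated by the following thresholded best-response dynamics: for $k=1,2,\dots$, if $k$ is even, choose $\alpha'\in\arg\min_{\alpha\in A}U(\alpha,\beta^{k-1})$, set $\alpha^k=\alpha'$ if $U(\alpha^{k-1},\beta^{k-1})-U(\alpha',\beta^{k-1})>\epsilon$ and $\alpha^k=\alpha^{k-1}$ otherwise, and set $\beta^k=\beta^{k-1}$; if $k$ is odd, choose $\beta'\in\arg\min_{\beta\in B}V(\alpha^{k-1},\beta)$, set $\beta^k=\beta'$ if $V(\alpha^{k-1},\beta^{k-1})-V(\alpha^{k-1},\beta')>\epsilon$ and $\beta^k=\beta^{k-1}$ otherwise, and set $\alpha^k=\alpha^{k-1}$. Then $(\alpha^k,\beta^k)\in\mathcal{N}_\epsilon$ for all $k\ge 3+\Psi(\alpha^0,\beta^0)/\epsilon$, where $\Psi(\alpha,\beta)=\xi(\alpha,\beta)+\varrho\zeta(\alpha)$ and $\mathcal{N}_\epsilon=\{(\alpha,\beta)\in A\times B: U(\alpha,\beta)\le U(\alpha',\beta)+\epsilon\ \forall\alpha'\in A,\ V(\alpha,\beta)\le V(\alpha,\beta')+\epsilon\ \forall\beta'\in B\}$.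
   Context: Privacy game. $\mathcal{X},\mathcal{W},\mathcal{Y}$ are finite nonempty sets; $p$ is a joint probability mass function of $(X,Z,W)$ on $\mathcal{X}\times\mathcal{X}\times\mathcal{W}$; $d:\mathcal{X}\times\mathcal{X}\to\mathbb{R}_{\ge 0}$; $\varrho$ is the privacy ratio. Sender policies: $A=\{\alpha=(\alpha_{yzw}):\alpha_{yzw}\in[0,1],\ \sum_{y\in\mathcal{Y}}\alpha_{yzw}=1\ \forall (z,w)\in\mathcal{X}\times\mathcal{W}\}$, with $\alpha_{yzw}=\mathbb{P}\{Y=y\mid Z=z,W=w\}$. Receiver policies: $B=\{\beta=(\beta_{\hat x y}):\beta_{\hat x y}\in[0,1],\ \sum_{\hat x\in\mathcal{X}}\beta_{\hat x y}=1\ \forall y\in\mathcal{Y}\}$, with $\beta_{\hat x y}=\mathbb{P}\{\hat X=\hat x\mid Y=y\}$. Define $\xi(\alpha,\beta)=\sum_{x,\hat x\in\mathcal{X}}\sum_{y\in\mathcal{Y}}\sum_{z\in\mathcal{X}}\sum_{w\in\mathcal{W}}d(x,\hat x)\beta_{\hat x y}\alpha_{yzw}p(x,z,w)$ and $\zeta(\alpha)=\sum_{y,w}P_{yw}\log\frac{P_{yw}}{P_y P_w}$ (with $0\log 0=0$), where $P_{yw}=\sum_{z,x}\alpha_{yzw}p(x,z,w)$, $P_y=\sum_{w}P_{yw}$, $P_w=\sum_{z,x}p(x,z,w)$ (the mutual information $I(Y;W)$). Sender cost $U(\alpha,\beta)=\xi(\alpha,\beta)+\varrho\zeta(\alpha)$;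 receiver cost $V(\alpha,\beta)=\xi(\alpha,\beta)$. *)

From HB Require Import structures.
From mathcomp Require Import all_boot all_order all_algebra.
From mathcomp Require Import reals exp.
Set Implicit Arguments. Unset Strict Implicit. Unset Printing Implicit Defensive.
Import Order.TTheory GRing.Theory Num.Theory.
Local Open Scope ring_scope.

Section Privacy.
Variables (R : realType) (X W Y : finType).

(* sender policy: alpha y z w = P{Y=y | Z=z, W=w} *)
Definition sender := Y -> X -> W -> R.
(* receiver policy: beta xh y = P{Xhat=xh | Y=y} *)
Definition receiver := X -> Y -> R.

Definition inA (a : sender) : Prop :=
  (forall y z w, 0 <= a y z w <= 1) /\ (forall z w, \sum_(y : Y) a y z w = 1).
Definition inB (b : receiver) : Prop :=
  (forall xh y, 0 <= b xh y <= 1) /\ (forall y, \sum_(xh : X) b xh y = 1).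

Variables (p : X -> X -> W -> R) (d : X -> X -> R) (rho : R).

Definition xi (a : sender) (b : receiver) : R :=
  \sum_(x : X) \sum_(xh : X) \sum_(y : Y) \sum_(z : X) \sum_(w : W)
     d x xh * b xh y * a y z w * p x z w.

Definition Pyw (a : sender) (y : Y) (w : W) : R :=
  \sum_(z : X) \sum_(x : X) a y z w * p x z w.
Definition Py (a : sender) (y : Y) : R := \sum_(w : W) Pyw a y w.
Definition Pw (w : W) : R := \sum_(z : X) \sum_(x : X) p x z w.

(* mutual information I(Y;W), natural logarithm, convention 0 log 0 = 0 *)
Definition zeta (a : sender) : R :=
  \sum_(y : Y) \sum_(w : W)
    (if Pyw a y w == 0 then 0
     else Pyw a y w * ln (Pyw a y w / (Py a y * Pw w))).

Definition U (a : sender) (b : receiver) : R := xi a b + rho * zeta a.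
Definition V (a : sender) (b : receiver) : R := xi a b.
Definition Psi (a : sender) (b : receiver) : R := xi a b + rho * zeta a.

Definition N_eps (eps : R) (a : sender) (b : receiver) : Prop :=
  inA a /\ inB b /\
  (forall a', inA a' -> U a b <= U a' b + eps) /\
  (forall b', inB b' -> V a b <= V a b' + eps).

End Privacy.

(** [Psi = U], and [Psi] differs from [V] by a term depending only on the
    sender, so [Psi] is an exact potential of the game.  Every accepted
    update lowers [Psi] by more than [eps], and [Psi >= 0] because distortions
    are nonnegative and mutual information is nonnegative (Gibbs' inequality).
    Hence fewer than [Psi(alpha^0, beta^0) / eps + 1] updates are ever accepted,
    and as soon as one round passes without an accepted update, both players
    are [eps]-best-responding. *)
From HB Require Import structures.
From mathcomp Require Import all_boot all_order all_algebra.
From mathcomp Require Import reals exp.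
From mathcomp Require Import lra.
Set Implicit Arguments. Unset Strict Implicit. Unset Printing Implicit Defensive.
Import Order.TTheory GRing.Theory Num.Theory.
Local Open Scope ring_scope.

Section ThresholdedDynamics.
Variables (R : realFieldType) (S : Type) (Phi : S -> R) (good : S -> Prop).
Variables (eps : R) (s : nat -> S).
Hypothesis eps_gt0 : 0 < eps.
Hypothesis Phi_ge0 : forall k, 0 <= Phi (s k).
Hypothesis stay_or_descend : forall k,
  s k.+1 = s k \/ (Phi (s k.+1) + eps < Phi (s k) /\ ~ good (s k)).
Hypothesis stay_good : forall k, (0 < k)%N -> s k.+1 = s k -> good (s k.+1).

Lemma good_or_descended k : (0 < k)%N ->
  good (s k) \/ Phi (s k) + k.-1%:R * eps <= Phi (s 0%N).
Proof.
case: k => // k _; elim: k => [|k IH].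
  right; rewrite mul0r addr0 /=.
  by case: (stay_or_descend 0) => [->|[? _]]; have := eps_gt0; lra.
case: (stay_or_descend k.+1) => [stay|[descent not_good]].
  by left; apply: stay_good.
case: IH => [//|IH]; right.
by rewrite /= -natr1 mulrDl mul1r; lra.
Qed.

Lemma good_eventually k : 3 + Phi (s 0%N) / eps <= k%:R -> good (s k).
Proof.
move=> hk; have k_gt0 : (0 < k)%N.
  rewrite lt0n; apply/eqP => k0; move: hk; rewrite k0.
  by have := divr_ge0 (Phi_ge0 0%N) (ltW eps_gt0); lra.
case: (good_or_descended k_gt0) => // bound; exfalso.
have : Phi (s 0%N) <= (k%:R - 3) * eps by rewrite -ler_pdivrMr //; lra.
have := eps_gt0; have := Phi_ge0 k; move: bound.
by rewrite -(prednK k_gt0) -natr1 /=; nra.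
Qed.

End ThresholdedDynamics.

Lemma threshold_update_eps_optimal (R : realFieldType) (T : Type)
    (P : T -> Prop) (f : T -> R) (eps : R) (x x' : T) :
  0 <= eps -> (forall y, P y -> f x' <= f y) ->
  forall y, P y -> f (if eps < f x - f x' then x' else x) <= f y + eps.
Proof. by move=> eps_ge0 x'_min y /x'_min; case: ifP => [_|/negbT]; lra. Qed.

Lemma mulr_ln_div_ge_sub (R : realType) (P Q : R) :
  0 < P -> 0 < Q -> P - Q <= P * ln (P / Q).
Proof.
move=> P0 Q0; have QP0 : 0 < Q / P by rewrite divr_gt0.
have ln_le : ln (Q / P) <= Q / P - 1.
  by have := @le_ln1Dx R (Q / P - 1); rewrite subrKC; apply; lra.
have -> : ln (P / Q) = - ln (Q / P) by rewrite -lnV ?posrE // invf_div.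
have := ler_wpM2l (ltW P0) ln_le.
by rewrite mulrBr mulrCA divff ?gt_eqF // !mulr1 mulrN; lra.
Qed.

Section PrivacyGame.
Variables (R : realType) (X W Y : finType).
Variables (p : X -> X -> W -> R) (d : X -> X -> R) (rho : R).
Hypothesis p_ge0 : forall x z w, 0 <= p x z w.
Hypothesis p_sum1 : \sum_(x : X) \sum_(z : X) \sum_(w : W) p x z w = 1.
Hypothesis d_ge0 : forall x xh, 0 <= d x xh.
Hypothesis rho_ge0 : 0 <= rho.

Lemma xi_ge0 (a : sender R X W Y) (b : receiver R X Y) :
  inA a -> inB b -> 0 <= xi p d a b.
Proof.
move=> [a01 _] [b01 _].
apply: sumr_ge0 => x _; apply: sumr_ge0 => xh _; apply: sumr_ge0 => y _.
apply: sumr_ge0 => z _; apply: sumr_ge0 => w _.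
case/andP: (a01 y z w) => a0 _; case/andP: (b01 xh y) => b0 _.
by rewrite !mulr_ge0.
Qed.

Lemma sum_Pw : \sum_w Pw p w = 1.
Proof.
rewrite -p_sum1 /Pw exchange_big /=; under eq_bigr do rewrite exchange_big /=.
by rewrite exchange_big /=; apply: eq_bigr => x _; rewrite exchange_big.
Qed.

Section Sender.
Variable a : sender R X W Y.
Hypothesis a_inA : inA a.

Lemma sum_Pyw_y w : \sum_y Pyw p a y w = Pw p w.
Proof.
rewrite /Pyw exchange_big; apply: eq_bigr => z _.
rewrite exchange_big; apply: eq_bigr => x _.
by rewrite -big_distrl /= a_inA.2 mul1r.
Qed.

Lemma sum_Py : \sum_y Py p a y = 1.
Proof. by rewrite /Py exchange_big -sum_Pw; apply: eq_bigr => w _; exact: sum_Pyw_y. Qed.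

Lemma Pyw_ge0 y w : 0 <= Pyw p a y w.
Proof.
apply: sumr_ge0 => z _; apply: sumr_ge0 => x _.
by case/andP: (a_inA.1 y z w) => a0 _; rewrite mulr_ge0.
Qed.

Lemma Pyw_le_Py y w : Pyw p a y w <= Py p a y.
Proof.
rewrite /Py (bigD1 w) //= lerDl.
by apply: sumr_ge0 => ? _; exact: Pyw_ge0.
Qed.

Lemma Pyw_le_Pw y w : Pyw p a y w <= Pw p w.
Proof.
apply: ler_sum => z _; apply: ler_sum => x _.
by case/andP: (a_inA.1 y z w) => _ a1; rewrite ler_piMl.
Qed.

Lemma zeta_ge0 : 0 <= zeta p a.
Proof.
have term_ge y w : Pyw p a y w - Py p a y * Pw p w <=
    (if Pyw p a y w == 0 then 0
     else Pyw p a y w * ln (Pyw p a y w / (Py p a y * Pw p w))).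
  have Pw0 : 0 <= Pw p w by do 2! (apply: sumr_ge0 => ? _).
  case: eqP => [->|/eqP ne0].
    by rewrite sub0r oppr_le0 mulr_ge0 // (le_trans (Pyw_ge0 y w) (Pyw_le_Py y w)).
  have Pyw_gt0 : 0 < Pyw p a y w by rewrite lt_def ne0 Pyw_ge0.
  apply: mulr_ln_div_ge_sub => //.
  by rewrite mulr_gt0 // (lt_le_trans Pyw_gt0) ?Pyw_le_Py ?Pyw_le_Pw.
apply: le_trans (ler_sum _ (fun y _ => ler_sum _ (fun w _ => term_ge y w))).
rewrite exchange_big /=.
under eq_bigr do rewrite sumrB sum_Pyw_y -mulr_suml sum_Py mul1r.
by rewrite sumrB subrr.
Qed.

End Sender.

Lemma Psi_ge0 (a : sender R X W Y) (b : receiver R X Y) :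
  inA a -> inB b -> 0 <= Psi p d rho a b.
Proof. by move=> aA bB; rewrite addr_ge0 ?mulr_ge0 ?xi_ge0 ?zeta_ge0. Qed.

Section Dynamics.
Variables (eps : R) (alpha : nat -> sender R X W Y) (beta : nat -> receiver R X Y).
Hypothesis eps_gt0 : 0 < eps.
Hypothesis alpha0_inA : inA (alpha 0%N).
Hypothesis beta0_inB : inB (beta 0%N).
Hypothesis sender_step : forall k : nat, (0 < k)%N -> ~~ odd k ->
  exists a' : sender R X W Y,
    inA a' /\
    (forall a, inA a -> U p d rho a' (beta k.-1) <= U p d rho a (beta k.-1)) /\
    alpha k = (if U p d rho (alpha k.-1) (beta k.-1) - U p d rho a' (beta k.-1) > eps
               then a' else alpha k.-1) /\
    beta k = beta k.-1.
Hypothesis receiver_step : forall k : nat, odd k ->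
  exists b' : receiver R X Y,
    inB b' /\
    (forall b, inB b -> V p d (alpha k.-1) b' <= V p d (alpha k.-1) b) /\
    beta k = (if V p d (alpha k.-1) (beta k.-1) - V p d (alpha k.-1) b' > eps
              then b' else beta k.-1) /\
    alpha k = alpha k.-1.

Lemma dynamics_inAB k : inA (alpha k) /\ inB (beta k).
Proof.
elim: k => [//|k [aA bB]].
case: (boolP (odd k.+1)) => [k_odd|k_even].
  have [b' [b'B [_ [-> ->]]]] := receiver_step k_odd.
  by split => //; case: ifP.
have [a' [a'A [_ [-> ->]]]] := @sender_step k.+1 isT k_even.
by split => //; case: ifP.
Qed.

Lemma sender_eps_optimal k : (0 < k)%N -> ~~ odd k ->
  forall a, inA a -> U p d rho (alpha k) (beta k) <= U p d rho a (beta k) + eps.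
Proof.
move=> k_gt0 k_even; have [a' [_ [a'_min [-> ->]]]] := sender_step k_gt0 k_even.
exact: (threshold_update_eps_optimal (f := fun a => U p d rho a (beta k.-1)) _
  (ltW eps_gt0) a'_min).
Qed.

Lemma receiver_eps_optimal k : odd k ->
  forall b, inB b -> V p d (alpha k) (beta k) <= V p d (alpha k) b + eps.
Proof.
move=> k_odd; have [b' [_ [b'_min [-> ->]]]] := receiver_step k_odd.
exact: (threshold_update_eps_optimal (f := V p d (alpha k.-1)) _ (ltW eps_gt0) b'_min).
Qed.

Lemma dynamics_stay_or_descend k :
  (alpha k.+1, beta k.+1) = (alpha k, beta k) \/
  (Psi p d rho (alpha k.+1) (beta k.+1) + eps < Psi p d rho (alpha k) (beta k) /\
   ~ N_eps p d rho eps (alpha k) (beta k)).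
Proof.
rewrite /Psi /N_eps; case: (boolP (odd k.+1)) => [k_odd|k_even].
  have [b' [b'B [_ [-> ->]]]] := receiver_step k_odd; rewrite /=.
  case: ifP => [gain|_]; last by left.
  by right; split=> [|[_ [_ [_ /(_ b' b'B)]]]]; move: gain; rewrite /V; lra.
have [a' [a'A [_ [-> ->]]]] := @sender_step k.+1 isT k_even; rewrite /=.
case: ifP => [gain|_]; last by left.
by right; split=> [|[_ [_ [/(_ a' a'A) + _]]]]; move: gain; rewrite /U; lra.
Qed.

(* The player who did not move at step [k.+1] is [eps]-best-responding, and
   so is the other one, who made the update at step [k] (hence [0 < k]). *)
Lemma dynamics_stay_good k : (0 < k)%N ->
  (alpha k.+1, beta k.+1) = (alpha k, beta k) ->
  N_eps p d rho eps (alpha k.+1) (beta k.+1).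
Proof.
move=> k_gt0 [stay_a stay_b]; have [aA bB] := dynamics_inAB k.+1.
do 2! split => //.
case: (boolP (odd k.+1)) => [k_odd|k_even].
  split; last exact: receiver_eps_optimal.
  by rewrite stay_a stay_b; apply: sender_eps_optimal => //; rewrite -k_odd.
split; first exact: sender_eps_optimal.
rewrite stay_a stay_b; apply: receiver_eps_optimal.
by move: k_even; rewrite /= negbK.
Qed.

Lemma dynamics_Psi_ge0 k : 0 <= Psi p d rho (alpha k) (beta k).
Proof. by have [] := dynamics_inAB k; exact: Psi_ge0. Qed.

End Dynamics.
End PrivacyGame.

Theorem mainTheorem6 (R : realType) (X W Y : finType)
  (p : X -> X -> W -> R) (d : X -> X -> R) (rho eps : R)
  (alpha : nat -> sender R X W Y) (beta : nat -> receiver R X Y) :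
  (0 < #|X|)%N -> (0 < #|W|)%N -> (0 < #|Y|)%N ->
  (forall x z w, 0 <= p x z w) ->
  \sum_(x : X) \sum_(z : X) \sum_(w : W) p x z w = 1 ->
  (forall x xh, 0 <= d x xh) ->
  0 <= rho -> 0 < eps ->
  inA (alpha 0%N) -> inB (beta 0%N) ->
  (forall k : nat, (0 < k)%N -> ~~ odd k ->
     exists a' : sender R X W Y,
       inA a' /\
       (forall a, inA a -> U p d rho a' (beta k.-1) <= U p d rho a (beta k.-1)) /\
       alpha k = (if U p d rho (alpha k.-1) (beta k.-1) - U p d rho a' (beta k.-1) > eps
                  then a' else alpha k.-1) /\
       beta k = beta k.-1) ->
  (forall k : nat, odd k ->
     exists b' : receiver R X Y,
       inB b' /\
       (forall b, inB b -> V p d (alpha k.-1) b' <= V p d (alpha k.-1) b) /\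
       beta k = (if V p d (alpha k.-1) (beta k.-1) - V p d (alpha k.-1) b' > eps
                 then b' else beta k.-1) /\
       alpha k = alpha k.-1) ->
  forall k : nat, 3 + Psi p d rho (alpha 0%N) (beta 0%N) / eps <= k%:R ->
    N_eps p d rho eps (alpha k) (beta k).
Proof.
move=> _ _ _ p_ge0 p_sum1 d_ge0 rho_ge0 eps_gt0 alpha0_inA beta0_inB
  sender_step receiver_step.
apply: (good_eventually (Phi := fun ab => Psi p d rho ab.1 ab.2)
  (good := fun ab => N_eps p d rho eps ab.1 ab.2) (s := fun k => (alpha k, beta k)))
  => // [k|k|k k_gt0 stay].
- exact: (dynamics_Psi_ge0 p_ge0 p_sum1 d_ge0 rho_ge0 alpha0_inA beta0_inB
    sender_step receiver_step).
- exact: (dynamics_stay_or_descend sender_step receiver_step).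
- exact: (dynamics_stay_good eps_gt0 alpha0_inA beta0_inB sender_step receiver_step
    k_gt0 stay).
Qed.
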